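(* Let $t_1e_{\gamma_1},\dots,t_se_{\gamma_s}$ (with $t_i\in\mathbb{T}^n$, $\gamma_i\in\{1,\dots,r\}$) and $c_1,\dots,c_s\in K\setminus\{0\}$ be given, and let $\Sigma''$ be the set of critical syzygies obtained by applying Rules 1 and 2 below. Then the set $\widetilde{\Sigma}=\{-c_j\cdot\sigma_{ij}\mid \sigma_{ij}\in\Sigma''\}$ is the reduced $\tau$-Gröbner basis of the module $\mathrm{Syz}_P(c_1t_1e_{\gamma_1},\dots,c_st_se_{\gamma_s})$.
   Context: $K$ is a field, $P=K[x_1,\dots,x_n]$ is positively graded by $W\in\mathrm{Mat}_{m,n}(\mathbb{Z})$ (i.e. $\deg_W(x_1^{\alpha_1}\cdots x_n^{\alpha_n})=W\cdot(\alpha_1,\dots,\alpha_n)^{\mathrm{tr}}$, $\mathrm{rk}(W)=m$, no zero column, first non-zero entry of each column positive), $\mathbb{T}^n$ is the set of terms of $P$, $F=\bigoplus_{i=1}^rP(-\delta_i)$ has basis $e_1,\dots,e_r$, and $\sigma$ is a module term ordering on $\mathbb{T}^n\langle e_1,\dots,e_r\rangle$. Let $d_i=\deg_W(t_ie_{\gamma_i})=\deg_W(t_i)+\delta_{\gamma_i}$ and $F'=\bigoplus_{i=1}^sP(-d_i)$ with canonical basis $\epsilon_1,\dots,\epsilon_s$. $\mathrm{Syz}_P(c_1t_1e_{\gamma_1},\dots,c_st_se_{\gamma_s})$ is the submodule of $F'$ of all $\sum f_i\epsilon_i$ with $\sum f_ic_it_ie_{\gamma_i}=0$. The ordering $\tau$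 on $\mathbb{T}^n\langle\epsilon_1,\dots,\epsilon_s\rangle$ is defined by $t\epsilon_i\ge_\tau t'\epsilon_j$ iff $tt_ie_{\gamma_i}>_\sigma t't_je_{\gamma_j}$, or $tt_ie_{\gamma_i}=t't_je_{\gamma_j}$ and $i\ge j$; it is a module term ordering. For $i,j$ with $\gamma_i=\gamma_j$ let $\sigma_{ij}=\frac{\mathrm{lcm}(t_i,t_j)}{c_it_i}\epsilon_i-\frac{\mathrm{lcm}(t_i,t_j)}{c_jt_j}\epsilon_j$ and $t_{ij}=\mathrm{lcm}(t_i,t_j)/t_i$. $\Sigma=\{\sigma_{ij}\mid 1\le i<j\le s,\ \gamma_i=\gamma_j\}$ is the set of critical syzygies. Rule 1: delete from $\Sigma$ all $\sigma_{jk}$ for which there is an index $i\in\{1,\dots,j-1\}$ (with $\gamma_i=\gamma_k$) such that $t_{ki}$ divides $t_{kj}$; call the result $\Sigma'$. Rule 2: delete from $\Sigma'$ all $\sigma_{ik}$ for which there is an index $j\in\{i+1,\dots,k-1\}$ (with $\gamma_j=\gamma_k$) such that $t_{kj}$ properly divides $t_{ki}$; call the result $\Sigma''$. *)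

From HB Require Import structures.
From mathcomp Require Import all_boot all_order all_algebra.
From mathcomp Require Import mpoly.
Set Implicit Arguments. Unset Strict Implicit. Unset Printing Implicit Defensive.
Import GRing.Theory.
Local Open Scope ring_scope.

Section Defs.
Variable n : nat.

(* Terms of P = K[x_1..x_n] are identified with exponent vectors 'X_{1..n}.
   A module term t e_i of a free module with basis e_1..e_k is a pair (t, i). *)
Definition mterm (k : nat) := ('X_{1..n} * 'I_k)%type.

Definition tdiv (t t' : 'X_{1..n}) : Prop := forall l : 'I_n, (t l <= t' l)%N.

Definition tlcm (t t' : 'X_{1..n}) : 'X_{1..n} := [multinom maxn (t l) (t' l) | l < n].

Definition mtdiv k (x y : mterm k) : Prop := x.2 = y.2 /\ tdiv x.1 y.1.

Definition module_term_ordering k (le : mterm k -> mterm k -> Prop) : Prop :=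
  (forall x, le x x) /\
  [/\ (forall x y, le x y -> le y x -> x = y),
      (forall x y z, le x y -> le y z -> le x z),
      (forall x y, le x y \/ le y x),
      (forall (t : 'X_{1..n}) x y, le x y -> le ((t + x.1)%MM, x.2) ((t + y.1)%MM, y.2))
    & (forall (t : 'X_{1..n}) (i : 'I_k), le (0%MM, i) (t, i))].

Variable K : fieldType.
Variable s : nat.

Definition vec := {ffun 'I_s -> {mpoly K[n]}}.

Definition vsupp (v : vec) (x : mterm s) : Prop := x.1 \in msupp (v x.2).

Definition vcoef (v : vec) (x : mterm s) : K := (v x.2)@_x.1.

Definition is_LT (le : mterm s -> mterm s -> Prop) (v : vec) (x : mterm s) : Prop :=
  vsupp v x /\ forall y, vsupp v y -> le y x.

(* G is a le-Groebner basis of the submodule M of F': G is contained in M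
   and the leading terms of G generate the leading term module LT(M). *)
Definition groebner_basis (le : mterm s -> mterm s -> Prop) (M G : vec -> Prop) : Prop :=
  (forall g, G g -> M g) /\
  (forall v, M v -> v != 0 ->
     exists g x y, [/\ G g, is_LT le g x, is_LT le v y & mtdiv x y]).

(* reduced Groebner basis: Groebner basis, every element is nonzero and monic,
   the leading terms form a minimal system of generators of LT(M), and no term
   of g - LT(g) lies in LT(M) (i.e. is divisible by some LT(g')). *)
Definition reduced_groebner_basis (le : mterm s -> mterm s -> Prop) (M G : vec -> Prop) : Prop :=
  groebner_basis le M G /\
  forall g, G g ->
    exists x, [/\ is_LT le g x, vcoef g x = 1 &
      forall g' x' y, G g' -> is_LT le g' x' -> vsupp g y -> mtdiv x' y ->
        g' = g /\ y = x].

Variable r : nat.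
Variables (t : 'I_s -> 'X_{1..n}) (gamma : 'I_s -> 'I_r) (c : 'I_s -> K).

Definition syz (f : vec) : Prop :=
  forall k : 'I_r,
    \sum_(i < s | gamma i == k) f i * (c i *: 'X_[t i]) = 0.

Definition tau_ord (sigma : mterm r -> mterm r -> Prop) (x y : mterm s) : Prop :=
  let X := ((x.1 + t x.2)%MM, gamma x.2) in
  let Y := ((y.1 + t y.2)%MM, gamma y.2) in
  (sigma X Y /\ X <> Y) \/ (X = Y /\ (x.2 <= y.2)%N).

Definition crit_syz (i j : 'I_s) : vec :=
  [ffun k => (if k == i then (c i)^-1 *: 'X_[(tlcm (t i) (t j) - t i)%MM] else 0)
           - (if k == j then (c j)^-1 *: 'X_[(tlcm (t i) (t j) - t j)%MM] else 0)].

Definition tq (i j : 'I_s) : 'X_{1..n} := (tlcm (t i) (t j) - t i)%MM.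

Definition in_Sigma (i j : 'I_s) : Prop := (i < j)%N /\ gamma i = gamma j.

Definition rule1 (j k : 'I_s) : Prop :=
  exists i : 'I_s, [/\ (i < j)%N, gamma i = gamma k & tdiv (tq k i) (tq k j)].

Definition in_Sigma' (j k : 'I_s) : Prop := in_Sigma j k /\ ~ rule1 j k.

Definition rule2 (i k : 'I_s) : Prop :=
  exists j : 'I_s, [/\ (i < j)%N, (j < k)%N, gamma j = gamma k,
                      tdiv (tq k j) (tq k i) & tq k j <> tq k i].

Definition in_Sigma'' (i k : 'I_s) : Prop := in_Sigma' i k /\ ~ rule2 i k.

Definition Sigma_tilde (v : vec) : Prop :=
  exists i j : 'I_s, in_Sigma'' i j /\ v = (- c j) *: crit_syz i j.

End Defs.

(* Write g_ik := -c_k sigma_ik.  Both terms of sigma_ik map to lcm(t_i, t_k) e_gamma_k under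
   t eps_j |-> t t_j e_gamma_j, so tau breaks the tie by the index: LT(g_ik) = t_ki eps_k, with
   coefficient 1.  If v is a syzygy with leading term t eps_k, the coefficient of t t_k e_gamma_k
   in sum_j v_j c_j t_j e_gamma_j must cancel against a term of v at some eps_i with
   gamma_i = gamma_k, and maximality of t eps_k forces i < k, whence t_ki | t.  Each rule deletes
   sigma_ik only in the presence of some sigma_jk with t_kj | t_ki and (deg t_kj, j)
   lexicographically smaller, so a surviving sigma_jk still has t_kj | t.  For reducedness, the
   only other term of g_ik is t_ik eps_i, and a surviving leading term dividing it, or a second
   one dividing t_ki eps_k, is exactly what Rules 1 and 2 exclude. *)

From mathcomp Require Import all_boot all_order all_algebra.
From mathcomp Require Import mpoly.
From mathcomp Require Import zify.
From Stdlib Require Import Classical.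
Set Implicit Arguments. Unset Strict Implicit. Unset Printing Implicit Defensive.
Import GRing.Theory.
Local Open Scope ring_scope.

Lemma tdivP n (a b : 'X_{1..n}) : reflect (tdiv a b) (a <= b)%MM.
Proof. exact: mnm_lepP. Qed.

Lemma mdeg_lem n (a b : 'X_{1..n}) : (a <= b)%MM -> (mdeg a <= mdeg b)%N.
Proof. by move=> ab; rewrite -(submK ab) mdegD leq_addl. Qed.

Lemma mdeg_ltm n (a b : 'X_{1..n}) : (a <= b)%MM -> a != b -> (mdeg a < mdeg b)%N.
Proof.
move=> ab; rewrite -(submK ab) mdegD -{1}[mdeg a]add0n ltn_add2r lt0n mdeg_eq0.
by apply: contra_neq => ->; rewrite add0m.
Qed.

Lemma mcoeffMX_if n (R : nzRingType) (p : {mpoly R[n]}) m M :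
  (p * 'X_[m])@_M = if (m <= M)%MM then p@_(M - m) else 0.
Proof.
case: ifP => [mM|mM]; first by rewrite -{1}(submK mM) addmC mcoeffMX.
apply: memN_msupp_eq0; rewrite (perm_mem (msuppMX p m)).
by apply/mapP => -[m' _ eM]; rewrite eM lem_addr in mM.
Qed.

Lemma exists_greatest (T : eqType) (le : T -> T -> Prop)
    (le_total : forall x y, le x y \/ le y x)
    (le_trans : forall x y z, le x y -> le y z -> le x z) (l : seq T) :
  l != [::] -> exists2 y, y \in l & forall z, z \in l -> le z y.
Proof.
elim: l => [//|a l IH] _.
have le_refl x : le x x by case: (le_total x x).
have [->|/IH [y yl ymax]] := eqVneq l [::].
  by exists a => [|z]; rewrite ?mem_seq1 // => /eqP ->.
have [ay|ya] := le_total a y.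
  by exists y => [|z]; rewrite inE ?yl ?orbT // => /predU1P [->|/ymax].
by exists a => [|z]; rewrite inE ?eqxx // => /predU1P [->|/ymax/le_trans]; auto.
Qed.

Lemma is_LT_exists n (K : fieldType) s (le : mterm n s -> mterm n s -> Prop)
    (le_total : forall x y, le x y \/ le y x)
    (le_trans : forall x y z, le x y -> le y z -> le x z) (v : vec n K s) :
  v != 0 -> exists x, is_LT le v x.
Proof.
move=> v0; pose l := [seq (m, i) | i <- enum 'I_s, m <- msupp (v i)].
have mem_l x : (x \in l) = (x.1 \in msupp (v x.2)).
  apply/allpairsPdep/idP => [[i [m [_ vm ->]]] //|vx].
  by exists x.2, x.1; rewrite mem_enum; case: x vx.
have [i vi] : exists i, v i != 0.
  apply/existsP; apply: contraNT v0 => /existsPn v0.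
  by apply/eqP/ffunP => i; rewrite ffunE; apply/eqP/negbNE.
have : l != [::].
  move: vi; rewrite -msupp_eq0; case E: (msupp (v i)) => [//|m ms] _.
  by apply/eqP => l0; have := mem_l (m, i); rewrite l0 /vsupp /= E mem_head.
case/(exists_greatest le_total le_trans) => x; rewrite mem_l => vx xmax.
by exists x; split => // y vy; apply: xmax; rewrite mem_l.
Qed.

Lemma is_LT_uniq n (K : fieldType) s (le : mterm n s -> mterm n s -> Prop)
    (le_anti : forall x y, le x y -> le y x -> x = y) (v : vec n K s) x y :
  is_LT le v x -> is_LT le v y -> x = y.
Proof. by move=> [vx xmax] [vy ymax]; apply: le_anti (ymax x vx) (xmax y vy). Qed.

Section TauOrdering.
Variables (n r s : nat) (t : 'I_s -> 'X_{1..n}) (gamma : 'I_s -> 'I_r).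
Variable sigma : mterm n r -> mterm n r -> Prop.
Hypothesis sigma_anti : forall X Y, sigma X Y -> sigma Y X -> X = Y.
Hypothesis sigma_trans : forall X Y Z, sigma X Y -> sigma Y Z -> sigma X Z.
Hypothesis sigma_total : forall X Y, sigma X Y \/ sigma Y X.

Local Notation tau := (tau_ord t gamma sigma).

Lemma tau_ord_refl x : tau x x.
Proof. by right. Qed.

Lemma tau_ord_same_image m i m' k :
  ((m + t i)%MM, gamma i) = ((m' + t k)%MM, gamma k) -> tau (m, i) (m', k) <-> (i <= k)%N.
Proof. by move=> same; split => [[[_ []]|[]]|] //; right. Qed.

Lemma tau_ord_total x y : tau x y \/ tau y x.
Proof.
case: x y => [m i] [m' k].
have [same|diff] := eqVneq ((m + t i)%MM, gamma i) ((m' + t k)%MM, gamma k).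
  by rewrite !tau_ord_same_image //; apply/orP/leq_total.
have [?|?] := sigma_total ((m + t i)%MM, gamma i) ((m' + t k)%MM, gamma k); [left|right]; left.
  by split=> // /eqP; rewrite (negbTE diff).
by split=> // /eqP; rewrite eq_sym (negbTE diff).
Qed.

Lemma tau_ord_trans x y z : tau x y -> tau y z -> tau x z.
Proof.
rewrite /tau_ord /=.
move=> [[xy nxy]|[-> xy]] [[yz nyz]|[<- yz]]; try by left.
- left; split => [|exz]; first exact: sigma_trans xy yz.
  by apply: nxy; apply: sigma_anti xy _; rewrite exz.
- by right; split => //; apply: leq_trans xy yz.
Qed.

Lemma tau_ord_anti x y : tau x y -> tau y x -> x = y.
Proof.
case: x y => [m i] [m' k] [[xy nxy]|[exy ik]] [[yx nyx]|[eyx ki]].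
- by case: nxy; apply: sigma_anti.
- by case: nxy; rewrite eyx.
- by case: nyx; rewrite exy.
have eik : i = k by apply/val_inj/anti_leq; rewrite ik ki.
by move: exy => /(congr1 fst) /=; rewrite eik => /addIm ->.
Qed.

End TauOrdering.

Lemma tlcmC n (a b : 'X_{1..n}) : tlcm a b = tlcm b a.
Proof. by apply/mnmP => l; rewrite !mnmE maxnC. Qed.

Section Cofactors.
Variables (n s : nat) (t : 'I_s -> 'X_{1..n}).

Lemma tq_addm i j : (tq t i j + t i)%MM = tlcm (t i) (t j).
Proof. by apply/mnmP => l; rewrite !(mnmDE, mnmBE, mnmE) subnK // leq_maxl. Qed.

Lemma tq_lem_cofactor i k m : (t i <= m + t k)%MM -> (tq t k i <= m)%MM.
Proof.
move/mnm_lepP => tim; apply/mnm_lepP => l.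
by have := tim l; rewrite !(mnmDE, mnmBE, mnmE); lia.
Qed.

Lemma tq_lem_shift i i' k : (tq t i i' <= tq t i k)%MM -> (tq t k i' <= tq t k i)%MM.
Proof.
move/mnm_lepP => le_ii'k; apply/mnm_lepP => l.
by have := le_ii'k l; rewrite !(mnmBE, mnmE); lia.
Qed.

End Cofactors.

Section Rules.
Variables (n r s : nat) (t : 'I_s -> 'X_{1..n}) (gamma : 'I_s -> 'I_r).

Lemma not_in_Sigma''_rules i k : in_Sigma gamma i k -> ~ in_Sigma'' t gamma i k ->
  rule1 t gamma i k \/ rule2 t gamma i k.
Proof. by move=> ik ik''; apply: NNPP; rewrite /in_Sigma'' /in_Sigma' in ik'' *; tauto. Qed.

Lemma in_Sigma''_cover i k : in_Sigma gamma i k ->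
  exists2 j, in_Sigma'' t gamma j k & (tq t k j <= tq t k i)%MM.
Proof.
(* Rule 1 lowers the index without raising mdeg (tq t k _); Rule 2 lowers the degree. *)
have [N] := ubnP (mdeg (tq t k i) * s + i); elim: N => // N IH in i *.
rewrite ltnS => ltN ik.
have [ik''|/(not_in_Sigma''_rules ik) [[j [ji gj /tdivP kji]]|[j [ij jk gj /tdivP kji nkji]]]] :=
  classic (in_Sigma'' t gamma i k); first by exists i => //; apply: lepm_refl.
- have ltN' : (mdeg (tq t k j) * s + j < N)%N.
    by have := leq_mul (mdeg_lem kji) (leqnn s); lia.
  have [l l'' klj] := IH j ltN' (conj (ltn_trans ji ik.1) gj).
  by exists l => //; apply: lepm_trans kji.
- have ltN' : (mdeg (tq t k j) * s + j < N)%N.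
    by have := leq_mul (mdeg_ltm kji (introN eqP nkji)) (leqnn s); have := ltn_ord j; lia.
  have [l l'' klj] := IH j ltN' (conj jk gj).
  by exists l => //; apply: lepm_trans kji.
Qed.

End Rules.

Section CriticalSyzygies.
Variables (n : nat) (K : fieldType) (r s : nat).
Variables (t : 'I_s -> 'X_{1..n}) (gamma : 'I_s -> 'I_r) (c : 'I_s -> K).
Hypothesis c_neq0 : forall i, c i != 0.

Definition ncrit_syz (i k : 'I_s) : vec n K s := (- c k) *: crit_syz t c i k.

Lemma ncrit_syzE i k l : i != k -> ncrit_syz i k l =
  if l == k then 'X_[tq t k i] else if l == i then - (c k / c i) *: 'X_[tq t i k] else 0.
Proof.
move=> ik; rewrite /ncrit_syz /crit_syz !ffunE.
have [->|lk] := eqVneq l k.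
  rewrite eq_sym (negbTE ik) sub0r scaleNr scalerN opprK scalerA.
  by rewrite mulrV ?unitfE // scale1r tlcmC.
by rewrite subr0; case: ifP; rewrite ?scaler0 // scalerA mulNr.
Qed.

Lemma vsupp_ncrit_syz i k y : i != k ->
  vsupp (ncrit_syz i k) y <-> y = (tq t i k, i) \/ y = (tq t k i, k).
Proof.
move=> ik; case: y => m l; rewrite /vsupp /= ncrit_syzE //.
have cki : - (c k / c i) != 0 by rewrite oppr_eq0 mulf_neq0 ?invr_eq0.
have [->|lk] := eqVneq l k.
  rewrite msuppX mem_seq1; split => [/eqP ->|[[_ eki]|[->]]]; [by right| |by []].
  by rewrite eki eqxx in ik.
have [->|li] := eqVneq l i.
  rewrite msuppMCX // mem_seq1; split => [/eqP ->|[[->]|[_ eik]]]; [by left|by []|].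
  by rewrite eik eqxx in ik.
by rewrite msupp0; split => // -[] [_ eli]; [move: li|move: lk]; rewrite eli eqxx.
Qed.

Lemma ncrit_syz_LT sigma i k : in_Sigma gamma i k ->
  is_LT (tau_ord t gamma sigma) (ncrit_syz i k) (tq t k i, k).
Proof.
move=> [ik gik]; have nik : i != k by rewrite neq_ltn ik.
split=> [|y /vsupp_ncrit_syz -/(_ nik) [->|->]]; last exact: tau_ord_refl.
  by apply/vsupp_ncrit_syz => //; right.
have same : ((tq t i k + t i)%MM, gamma i) = ((tq t k i + t k)%MM, gamma k).
  by rewrite !tq_addm tlcmC gik.
by apply/(tau_ord_same_image _ same)/ltnW.
Qed.

Lemma ncrit_syz_monic i k : i != k -> vcoef (ncrit_syz i k) (tq t k i, k) = 1.
Proof. by move=> ik; rewrite /vcoef /= ncrit_syzE // eqxx mcoeffX eqxx. Qed.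

Lemma ncrit_syz_syz i k : in_Sigma gamma i k -> syz t gamma c (ncrit_syz i k).
Proof.
move=> [ik gik] l; have nik : i != k by rewrite neq_ltn ik.
rewrite big_mkcond (bigD1 k) //= (bigD1 i) //= big1 => [|j /andP [jk ji]]; last first.
  by rewrite ncrit_syzE // (negbTE jk) (negbTE ji) mul0r if_same.
rewrite addr0 !ncrit_syzE // eqxx (negbTE nik) eqxx gik; case: ifP => _; last by rewrite addr0.
rewrite -!scalerAr -!scalerAl -!mpolyXD !scalerA addmC tq_addm addmC tq_addm tlcmC.
by rewrite mulrN mulrCA mulrV ?unitfE // mulr1 scaleNr subrr.
Qed.

Lemma syz_cancel_partner v m k : syz t gamma c v -> vsupp v (m, k) ->
  exists i, [/\ i != k, gamma i = gamma k, (t i <= m + t k)%MM & vsupp v (m + t k - t i, i)%MM].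
Proof.
move=> v_syz vmk.
pose partner i := [&& i != k, gamma i == gamma k, (t i <= m + t k)%MM &
                      (m + t k - t i)%MM \in msupp (v i)].
have [i /and4P [ik /eqP gik ti vi]|no_partner] := pickP partner; first by exists i.
have := congr1 (mcoeff (m + t k)%MM) (v_syz (gamma k)).
rewrite mcoeff0 raddf_sum (bigD1 k) //= big1 => [|i /andP [/eqP gik ik]]; last first.
  rewrite -scalerAr mcoeffZ mcoeffMX_if; case: ifP => ti; last by rewrite mulr0.
  have := no_partner i; rewrite /partner ik gik ti eqxx /= => /negbT.
  by rewrite -mcoeff_eq0 => /eqP ->; rewrite mulr0.
rewrite addr0 -scalerAr mcoeffZ mcoeffMX_if lem_addl addmK => /eqP.
by rewrite mulf_eq0 (negbTE (c_neq0 k)) mcoeff_eq0 vmk.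
Qed.

Lemma syz_LT_dvd sigma v y : syz t gamma c v -> is_LT (tau_ord t gamma sigma) v y ->
  exists2 i, in_Sigma'' t gamma i y.2 & mtdiv (tq t y.2 i, y.2) y.
Proof.
case: y => m k v_syz [vy ymax] /=.
have [i [ik gik ti vi]] := syz_cancel_partner v_syz vy.
have same_image : ((m + t k - t i + t i)%MM, gamma i) = ((m + t k)%MM, gamma k).
  by rewrite submK // gik.
have /(tau_ord_same_image _ same_image) /= le_ik := ymax _ vi.
have lt_ik : (i < k)%N by rewrite ltn_neqAle ik le_ik.
have [j j'' kji] := in_Sigma''_cover t (conj lt_ik gik).
by exists j => //; split => //; apply/tdivP; apply: lepm_trans kji (tq_lem_cofactor ti).
Qed.

Lemma Sigma''_irredundant i k i' k' y :
  in_Sigma'' t gamma i k -> in_Sigma'' t gamma i' k' ->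
  vsupp (ncrit_syz i k) y -> mtdiv (tq t k' i', k') y -> (i', k') = (i, k) /\ y = (tq t k i, k).
Proof.
move=> [[[ik gik] nrule1] nrule2] [[[ik' gik'] nrule1'] _].
have nik : i != k by rewrite neq_ltn ik.
case/(vsupp_ncrit_syz _ nik) => -> [/= ek' /tdivP le_tq]; subst k'.
  case: nrule1; exists i'; split => //; first by rewrite gik'.
  exact/tdivP/tq_lem_shift.
have [lt_i'i|lt_ii'|/val_inj eq_i'i] := ltngtP i' i.
- by case: nrule1; exists i'; split => //; apply/tdivP.
- have [eq_tq|ne_tq] := eqVneq (tq t k i') (tq t k i).
    by case: nrule1'; exists i; split => //; rewrite eq_tq; apply/tdivP/lepm_refl.
  by case: nrule2; exists i'; split => //; [apply/tdivP|apply/eqP].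
- by rewrite eq_i'i.
Qed.

End CriticalSyzygies.

Theorem proposition4p5 (n : nat) (K : fieldType) (r s : nat)
  (sigma : mterm n r -> mterm n r -> Prop)
  (Hsigma : module_term_ordering sigma)
  (t : 'I_s -> 'X_{1..n}) (gamma : 'I_s -> 'I_r) (c : 'I_s -> K)
  (Hc : forall i, c i != 0) :
  reduced_groebner_basis (tau_ord t gamma sigma)
    (syz t gamma c) (Sigma_tilde t gamma c).
Proof.
have [_ [sigma_anti sigma_trans sigma_total _ _]] := Hsigma.
have tau_total := tau_ord_total t gamma sigma_total.
have tau_trans := tau_ord_trans (t := t) (gamma := gamma) sigma_anti sigma_trans.
have tau_anti := tau_ord_anti (t := t) (gamma := gamma) sigma_anti.
split; first split.
- by move=> _ [i [k [[[ik _] _] ->]]]; apply: ncrit_syz_syz.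
- move=> v v_syz v0; have [y vy] := is_LT_exists tau_total tau_trans v0.
  have [i i'' div_iy] := syz_LT_dvd Hc v_syz vy; have [[i_S _] _] := i''.
  exists (ncrit_syz t c i y.2), (tq t y.2 i, y.2), y; split => //; first by exists i, y.2.
  exact (ncrit_syz_LT t Hc sigma i_S).
- move=> _ [i [k [ik'' ->]]]; have [[ik _] _] := ik''.
  exists (tq t k i, k); split; first exact (ncrit_syz_LT t Hc sigma ik).
    by apply: (ncrit_syz_monic t Hc); rewrite neq_ltn ik.1.
  move=> _ x' y [i' [k' [ik''' ->]]] LT' vy div_y.
  have [[ik' _] _] := ik'''.
  move: div_y; rewrite (is_LT_uniq tau_anti LT' (ncrit_syz_LT t Hc sigma ik')) => div_y.
  by have [[-> ->] ->] := Sigma''_irredundant Hc ik'' ik''' vy div_y.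
Qed.
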